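(* Let $m\ge 2$ and $1\le k\le 2^m$ be integers, and let $\mathcal B$ be a nonempty set of $k$-element subsets of $\mathrm{PG}(1,2^m)$ that is invariant under the action of $\mathrm{PGL}_2(\mathrm{GF}(2^m))$ (i.e. $\pi(B)\in\mathcal B$ for all $B\in\mathcal B$ and all $\pi\in \mathrm{PGL}_2(\mathrm{GF}(2^m))$). Let $\mathbb D=(\mathrm{PG}(1,2^m),\mathcal B)$. Then the $2$-rank of $\mathbb D$ is $2^m$ if $k$ is even and $2^m+1$ if $k$ is odd.
   Context: $\mathrm{PGL}_2(\mathrm{GF}(2^m))$ acts on $\mathrm{PG}(1,2^m)=\mathrm{GF}(2^m)\cup\{\infty\}$ by linear fractional transformations. The $2$-rank of an incidence structure $(X,\mathcal B)$ is the rank over $\mathrm{GF}(2)$ of its $|\mathcal B|\times|X|$ $(0,1)$-incidence matrix (entry $1$ iff the point lies in the block). *)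

From HB Require Import structures.
From mathcomp Require Import all_boot all_order all_algebra all_field.
Set Implicit Arguments. Unset Strict Implicit. Unset Printing Implicit Defensive.
Import GRing.Theory.
Local Open Scope ring_scope.

(* The projective line PG(1,q) = F ∪ {∞}, with None = ∞ and Some x = x. *)
Definition projline (F : finFieldType) := option F.

Definition lft (F : finFieldType) (a b c d : F) (x : option F) : option F :=
  match x with
  | None => if c == 0 then None else Some (a / c)
  | Some y => if c * y + d == 0 then None else Some ((a * y + b) / (c * y + d))
  end.

Definition in_PGL2 (F : finFieldType) (f : option F -> option F) : Prop :=
  exists a b c d : F, a * d - b * c != 0 /\ f =1 lft a b c d.

Definition incidence_mx (T : finType) (B : {set {set T}}) :
    'M['F_2]_(#|B|, #|T|) :=
  \matrix_(i < #|B|, j < #|T|)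
     (if enum_val j \in (enum_val i : {set T}) then 1 else 0).

Definition two_rank (T : finType) (B : {set {set T}}) : nat :=
  \rank (incidence_mx B).

From mathcomp Require Import all_boot all_order all_algebra all_field.
Set Implicit Arguments. Unset Strict Implicit. Unset Printing Implicit Defensive.
Import GRing.Theory.
Local Open Scope ring_scope.

(* Moving a suitable point to ∞ gives a block Y with an odd number of affine
   points.  Over GF(2) the indicators of the 2^m translates of Y then sum to the
   indicator of the complement of {∞}, and applying the involution of PGL_2
   swapping ∞ and p gives the complement of {p}.  Differences of these
   complements are the vectors e_p - e_q, which span the even-weight code of
   dimension 2^m.  If k is even every block has even weight, so the rank is
   2^m; if k is odd, Y lies outside that code and the rank is 2^m + 1. *)

Section SumZeroRows.
Variables (K : fieldType) (n : nat).
Local Notation ones := (const_mx 1 : 'cV[K]_n).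

Lemma mxrank_ones : \rank ones = (0 < n)%N.
Proof.
have [n0|n_gt0] := posnP n.
  apply/eqP; rewrite -leqn0.
  by apply: leq_trans (rank_leq_row _) _; rewrite n0.
apply/eqP; rewrite eqn_leq rank_leq_col lt0n mxrank_eq0.
by apply/eqP => /matrixP/(_ (Ordinal n_gt0) 0)/eqP; rewrite !mxE oner_eq0.
Qed.

Lemma mxrank_kermx_ones : \rank (kermx ones) = n.-1.
Proof. by rewrite mxrank_ker mxrank_ones; case: posnP => [->|]; rewrite ?subn1. Qed.

Lemma kermx_ones_sub r (A : 'M[K]_(r, n)) :
  (forall i j : 'I_n, ('e_i - 'e_j : 'rV_n) <= A)%MS -> (kermx ones <= A)%MS.
Proof.
move=> deltaA; apply/row_subP => l; set v := row l _.
have v_sum0 : \sum_j v 0 j = 0.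
  transitivity ((v *m ones) 0 0); last by rewrite -row_mul mulmx_ker row0 mxE.
  by rewrite mxE; apply: eq_bigr => j _; rewrite !mxE mulr1.
case: (pickP (@predT 'I_n)) => [j0 _|no_col]; last first.
  by rewrite (row_sum_delta v) big_pred0 ?sub0mx.
have -> : v = \sum_j v 0 j *: ('e_j - 'e_j0).
  rewrite (eq_bigr _ (fun j _ => scalerBr _ _ _)) sumrB -scaler_suml v_sum0.
  by rewrite scale0r subr0 -row_sum_delta.
by apply: summx_sub => j _; apply: scalemx_sub.
Qed.

Lemma mxrank_sum0_rows r (A : 'M[K]_(r, n)) :
  (kermx ones <= A)%MS -> A *m ones = 0 -> \rank A = n.-1.
Proof.
move=> kerA A_sum0; rewrite -mxrank_kermx_ones; apply/eqmx_rank.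
by rewrite kerA andbT; apply/sub_kermxP.
Qed.

Lemma mxrank_rows_full r (A : 'M[K]_(r, n)) (u : 'rV[K]_n) :
  (kermx ones <= A)%MS -> (u <= A)%MS -> u *m ones != 0 -> \rank A = n.
Proof.
move=> kerA uA u_sum; apply/eqP; rewrite eqn_leq rank_leq_col /=.
have kerA_proper : (kermx ones < A)%MS.
  rewrite ltmxE kerA /=; apply: contra u_sum => /(submx_trans uA).
  by move/sub_kermxP ->.
apply: leq_trans (leqSpred n) _.
by rewrite -mxrank_kermx_ones; apply: rank_ltmx.
Qed.

End SumZeroRows.

Lemma natr_F2 n : (n%:R : 'F_2) = (odd n)%:R.
Proof. by rewrite -(Zp_nat_mod (p:=2)) // modn2. Qed.

Section IndicatorRows.
Variable T : finType.

Definition indicator_row {R : pzSemiRingType} (Z : {set T}) : 'rV[R]_#|T| :=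
  \row_j (if enum_val j \in Z then 1 else 0).

Lemma indicator_rowE {R : pzSemiRingType} (Z : {set T}) i j :
  (indicator_row Z : 'rV[R]_#|T|) i j = if enum_val j \in Z then 1 else 0.
Proof. exact: mxE. Qed.

Lemma indicator_row_mul_ones (R : pzSemiRingType) (Z : {set T}) :
  indicator_row Z *m const_mx 1 = const_mx (#|Z|%:R : R) :> 'cV_1.
Proof.
apply/matrixP => i l; rewrite !mxE.
under eq_bigr do rewrite !mxE mulr1.
rewrite -(big_enum_val (fun x => if x \in Z then 1 else 0)).
by rewrite -big_mkcond sumr_const.
Qed.

Lemma indicator_row_setC1 (R : pzRingType) (p : T) :
  indicator_row (~: [set p]) = const_mx 1 - 'e_(enum_rank p) :> 'rV[R]_#|T|.
Proof.
apply/rowP => j; rewrite !mxE in_setC in_set1 -{1}(enum_rankK p).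
by rewrite (inj_eq enum_val_inj) eqxx; case: eqP; rewrite ?subrr ?subr0.
Qed.

Lemma kermx_ones_sub_setC1 (K : fieldType) r (A : 'M[K]_(r, #|T|)) :
  (forall p, (indicator_row (~: [set p]) <= A)%MS) ->
  (kermx (const_mx 1 : 'cV_#|T|) <= A)%MS.
Proof.
move=> complA; apply: kermx_ones_sub => i j.
have -> : 'e_i - 'e_j =
    indicator_row (~: [set enum_val j]) - indicator_row (~: [set enum_val i])
    :> 'rV[K]_#|T|.
  by rewrite !indicator_row_setC1 !enum_valK opprB [RHS]addrC addrA subrK.
by apply: addmx_sub; rewrite ?eqmx_opp.
Qed.

Variable B : {set {set T}}.

Lemma row_incidence_mx i : row i (incidence_mx B) = indicator_row (enum_val i).
Proof. by apply/rowP => j; rewrite !mxE. Qed.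

Lemma indicator_row_sub X : X \in B -> (indicator_row X <= incidence_mx B)%MS.
Proof. by move=> XB; rewrite -(enum_rankK_in XB XB) -row_incidence_mx row_sub. Qed.

Lemma incidence_mx_mul_ones k :
  {in B, forall X : {set T}, #|X| = k} ->
  incidence_mx B *m const_mx 1 = const_mx k%:R :> 'cV_#|B|.
Proof.
move=> cardB; apply/row_matrixP => i.
rewrite row_mul row_incidence_mx indicator_row_mul_ones cardB ?enum_valP //.
by apply/rowP => j; rewrite !mxE.
Qed.

End IndicatorRows.

Section ProjectiveLine.
Variable F : finFieldType.
Implicit Types (p z : option F) (X Y : {set option F}).

Definition translation (b : F) : option F -> option F := omap (fun y => y + b).

Lemma translationK b : cancel (translation b) (translation (- b)).
Proof. by case=> //= y; rewrite addrK. Qed.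

Lemma translationNK b : cancel (translation (- b)) (translation b).
Proof. by case=> //= y; rewrite subrK. Qed.

Lemma translation_PGL2 b : in_PGL2 (translation b).
Proof.
exists 1, b, 0, 1; split=> [|[y|]] /=; rewrite ?eqxx //.
  by rewrite mulr1 mulr0 subr0 oner_eq0.
by rewrite mul0r add0r oner_eq0 divr1 mul1r.
Qed.

Definition inversion : option F -> option F := lft 0 1 1 0.

Lemma inversion_PGL2 : in_PGL2 inversion.
Proof. by exists 0, 1, 1, 0; rewrite mul0r mulr1 sub0r oppr_eq0 oner_eq0. Qed.

Lemma inversionK : involutive inversion.
Proof.
case=> [y|] /=; last by rewrite oner_eq0 /= mul0r mul1r addr0 eqxx.
rewrite mul1r addr0 mul0r add0r div1r.
have [->|y0] := eqVneq y 0; first by rewrite /= oner_eq0 mul0r.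
by rewrite /= mul1r addr0 mul0r add0r div1r invr_eq0 (negbTE y0) invrK.
Qed.

Definition swap_infinity p : option F -> option F :=
  if p is Some c then translation c \o inversion \o translation (- c) else id.

Lemma swap_infinityK p : involutive (swap_infinity p).
Proof.
case: p => [c|] x //=.
by rewrite translationK inversionK translationNK.
Qed.

Lemma swap_infinity_None p : swap_infinity p None = p.
Proof. by case: p => [c|] //=; rewrite oner_eq0 /= mul0r add0r. Qed.

Lemma cards_option X : #|X| = ((None \in X) + #|Some @^-1: X|)%N.
Proof.
rewrite (cardsD1 None) -(card_imset (Some @^-1: X) Some_inj); congr (_ + _)%N.
apply: eq_card => -[y|]; rewrite !inE /=; last by apply/esym/imsetP => -[].
by rewrite mem_imset ?inE //; apply: Some_inj.
Qed.

Lemma mem_imset_translation b z Y :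
  (z \in translation b @: Y) = (translation (- b) z \in Y).
Proof.
by rewrite -{1}(translationNK b z) mem_imset //; apply: can_inj (translationK b).
Qed.

Lemma card_translates_mem z Y :
  #|[set b | z \in translation b @: Y]| =
  if z is Some _ then #|Some @^-1: Y| else ((None \in Y) * #|F|)%N.
Proof.
case: z => [w|].
  rewrite -[RHS](card_preimset _ (inv_inj (subKr w))).
  by apply: eq_card => b; rewrite !inE mem_imset_translation.
rewrite (_ : [set b | _] = if None \in Y then setT else set0).
  by case: (None \in Y); rewrite /= ?cardsT ?cards0 ?mul1n.
by apply/setP => b; rewrite inE mem_imset_translation; case: ifP; rewrite inE.
Qed.

Lemma sum_indicator_row_translates (g : option F -> option F) Y :
  injective g -> ~~ odd #|F| -> odd #|Some @^-1: Y| ->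
  \sum_(b : F) indicator_row (g @: (translation b @: Y)) =
    indicator_row (~: [set g None]) :> 'rV['F_2]_#|{: option F}|.
Proof.
move=> g_inj evenF oddY; apply/rowP => j; rewrite summxE indicator_rowE.
have [g' gK g'K] := injF_bij g_inj.
rewrite in_setC in_set1 -{1}(g'K (enum_val j)) (inj_eq g_inj).
under eq_bigr do rewrite indicator_rowE (can_imset_pre _ gK) inE.
set z := g' (enum_val j); rewrite -big_mkcond.
rewrite (eq_bigl (fun b => b \in [set b | z \in translation b @: Y])); last first.
  by move=> b; rewrite inE.
rewrite sumr_const card_translates_mem natr_F2.
by case: z => [w|] /=; rewrite ?oddY ?oddM ?(negbTE evenF) ?andbF.
Qed.

Variable B : {set {set option F}}.
Hypothesis B_PGL2_closed : forall (f : option F -> option F), in_PGL2 f ->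
  forall X, X \in B -> [set f x | x in X] \in B.

Lemma swap_infinity_closed p X : X \in B -> swap_infinity p @: X \in B.
Proof.
case: p => [c|] XB /=; last by rewrite imset_id.
rewrite !imset_comp; apply: B_PGL2_closed (translation_PGL2 c) _ _.
apply: B_PGL2_closed inversion_PGL2 _ _.
exact: B_PGL2_closed (translation_PGL2 (- c)) _ XB.
Qed.

Lemma exists_block_odd_affine_part k :
  B != set0 -> {in B, forall X : {set option F}, #|X| = k} ->
  (0 < k < #|{: option F}|)%N ->
  exists2 Y, Y \in B & odd #|Some @^-1: Y|.
Proof.
case/set0Pn => X XB cardB /andP[k_gt0 k_lt].
have [x0 x0X] : exists x0, (x0 \in X) = ~~ odd k.
  case: (odd k) => /=.
    have /set0Pn[x0] : ~: X != set0.
      by rewrite -card_gt0 -(ltn_add2l #|X|) cardsC addn0 cardB.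
    by rewrite inE => /negbTE; exists x0.
  have /set0Pn[x0 x0X] : X != set0 by rewrite -card_gt0 cardB.
  by exists x0.
exists (swap_infinity x0 @: X); first exact: swap_infinity_closed.
have swap_inj := inv_inj (swap_infinityK x0).
have := cards_option (swap_infinity x0 @: X).
rewrite card_imset // cardB // -{1}(swap_infinityK x0 None) swap_infinity_None.
rewrite mem_imset // x0X => /(congr1 odd); rewrite oddD oddb.
by case: (odd k) => /= [<-|/esym/negbFE].
Qed.

Lemma indicator_row_setC1_sub Y p :
  Y \in B -> ~~ odd #|F| -> odd #|Some @^-1: Y| ->
  (indicator_row (~: [set p]) <= incidence_mx B)%MS.
Proof.
move=> YB evenF oddY; rewrite -(swap_infinity_None p).
rewrite -(sum_indicator_row_translates (inv_inj (swap_infinityK p)) evenF oddY).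
apply: summx_sub => b _; apply: indicator_row_sub; apply: swap_infinity_closed.
exact: B_PGL2_closed (translation_PGL2 b) _ YB.
Qed.

End ProjectiveLine.

Local Close Scope ring_scope.

Theorem theorem12 (F : finFieldType) (m k : nat)
  (hF : #|F| = 2 ^ m) (hm : 2 <= m) (hk1 : 1 <= k) (hk2 : k <= 2 ^ m)
  (B : {set {set option F}})
  (hne : B != set0)
  (hcard : forall X, X \in B -> #|X| = k)
  (hinv : forall (f : option F -> option F), in_PGL2 f ->
            forall X, X \in B -> [set f x | x in X] \in B) :
  two_rank B = (if odd k then (2 ^ m).+1 else 2 ^ m).
Proof.
have cardT : #|{: option F}| = (2 ^ m).+1 by rewrite card_option hF.
have evenF : ~~ odd #|F| by rewrite hF oddX orbF -lt0n (ltnW hm).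
have [|Y YB oddY] := exists_block_odd_affine_part hinv hne hcard.
  by rewrite hk1 cardT ltnS.
have kerB := kermx_ones_sub_setC1
  (fun p => indicator_row_setC1_sub hinv p YB evenF oddY).
rewrite /two_rank; case: ifP => k_odd.
  rewrite (mxrank_rows_full kerB (indicator_row_sub YB)) ?cardT //.
  rewrite indicator_row_mul_ones hcard // natr_F2 k_odd.
  by apply/eqP => /matrixP/(_ ord0 ord0)/eqP; rewrite !mxE oner_eq0.
rewrite (mxrank_sum0_rows kerB) ?cardT //.
rewrite (incidence_mx_mul_ones hcard) natr_F2 k_odd.
by apply/matrixP => i j; rewrite !mxE.
Qed.
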